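(* Let $G=(V,E,H)$ be a HEDG and $\mathbb{P}_V$ a probability distribution on $\mathcal{X}_V=\prod_{v\in V}\mathcal{X}_v$ (standard Borel spaces) such that $(G,\mathbb{P}_V)$ satisfies the loop-wisely solvable structural equations property (lsSEP). Then for every subset $W\subseteq V$, the pair $(G^{\mathrm{marg}\setminus W},\mathbb{P}_{V\setminus W})$ also satisfies lsSEP, where $\mathbb{P}_{V\setminus W}$ is the marginal of $\mathbb{P}_V$ on $\mathcal{X}_{V\setminus W}$.
   Context: HEDG $G=(V,E,H)$: $V$ finite, $E\subseteq V\times V$ (self-loops allowed), $H$ a simplicial complex on $V$ (contains singletons, closed under subsets), $\tilde H$ its inclusion-maximal elements. $\mathrm{Pa}^G(S)=\{u:(u,v)\in E\text{ for some }v\in S\}$. A strongly connected induced sub-HEDG (loop) is a nonempty $S\subseteq V$ such that any two nodes of $S$ are joined by directed paths in both directions using only nodes of $S$ (singletons are loops). Marginalization $G^{\mathrm{marg}\setminus W}=(V\setminus W,E',H')$: $v_1\to v_2\in E'$ iff $G$ has a directed path $v_1\to u_1\to\cdots\to u_r\to v_2$ ($r\ge0$, all $u_i\in W$); $F'\subseteq V\setminus W$ is in $H'$ iff there is $F\in H$, $F\subseteq F'\cup W$, such that each $v\in F'$ lies in $F\setminus W$ or is reached by a directed path $u_1\to\cdots\to u_r\to v$ ($r\ge1$, $u_i\in W$, $u_1\in F$). lsSEP for $(G,\mathbb{P}_V)$: there exist a probability space $(\Omega,\mathfrak A,\mathbb P)$, jointly independent random variables $E_F:\Omega\to\mathcal{E}_F$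 ($F\in\tilde H$) in standard Borel spaces, measurable $f_v:\mathcal{X}_{\mathrm{Pa}^G(v)}\times\mathcal{E}_v\to\mathcal{X}_v$ with $\mathcal{E}_v=\prod_{F\in\tilde H,v\in F}\mathcal{E}_F$, random variables $X_v:\Omega\to\mathcal{X}_v$ with $X_v=f_v(X_{\mathrm{Pa}^G(v)},E_v)$ a.s. ($E_v=(E_F)_{F\ni v}$) and joint law of $(X_v)_{v\in V}$ equal to $\mathbb{P}_V$, and for every loop $S$ and every $v\in S$ a measurable $\hat g_{S,v}:\mathcal{X}_{\mathrm{Pa}^G(S)\setminus S}\times\mathcal{E}_S\to\mathcal{X}_v$ with $X_v=\hat g_{S,v}(X_{\mathrm{Pa}^G(S)\setminus S},E_S)$ a.s., where $\mathcal{E}_S=\prod_{F\in\tilde H,F\cap S\ne\emptyset}\mathcal{E}_F$ and $E_S=(E_F)_{F\cap S\neq\emptyset}$. *)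

From HB Require Import structures.
From mathcomp Require Import all_boot all_order all_algebra.
From mathcomp Require Import all_classical all_reals all_analysis.
Set Implicit Arguments. Unset Strict Implicit. Unset Printing Implicit Defensive.
Import Order.TTheory GRing.Theory Num.Theory.

Record HEDG (V : finType) := MkHEDG {
  hedge : rel V ;
  hcomplex : {set {set V}}
}.

Definition is_simplicial_complex (V : finType) (H : {set {set V}}) : Prop :=
  (forall v : V, [set v] \in H) /\
  (forall F F' : {set V}, F \in H -> F' \subset F -> F' \in H).

Definition is_HEDG (V : finType) (G : HEDG V) : Prop :=
  is_simplicial_complex (hcomplex G).

Definition maxfaces (V : finType) (G : HEDG V) : {set {set V}} :=
  [set F in hcomplex G |
     [forall F' in hcomplex G, (F \subset F') ==> (F' == F)]].

(** Index type of the maximal faces (the index set of the exogenous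
    random variables E_F). *)
Definition Fidx (V : finType) (G : HEDG V) : finType :=
  {F : {set V} | F \in maxfaces G}.

Definition pa (V : finType) (G : HEDG V) (S : {set V}) : {set V} :=
  [set u | [exists v in S, hedge G u v]].

Definition loop (V : finType) (G : HEDG V) (S : {set V}) : bool :=
  (S != finset.set0) &&
  [forall a in S, forall b in S,
     connect [rel x y | [&& x \in S, y \in S & hedge G x y]] a b].

Definition edgeW (V : finType) (G : HEDG V) (W : {set V}) : rel V :=
  [rel x y | [&& x \in W, y \in W & hedge G x y]].

Definition dpath_via (V : finType) (G : HEDG V) (W : {set V}) (x y : V) : bool :=
  hedge G x y ||
  [exists u1, exists ur,
     [&& u1 \in W, ur \in W, hedge G x u1, connect (edgeW G W) u1 ur
       & hedge G ur y]].

Definition reached_from_via (V : finType) (G : HEDG V) (W F : {set V}) (y : V) : bool :=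
  [exists u1 in F, exists ur,
     [&& u1 \in W, ur \in W, connect (edgeW G W) u1 ur & hedge G ur y]].

Definition subV (V : finType) (W : {set V}) : finType := {v : V | v \notin W}.

Definition marg (V : finType) (G : HEDG V) (W : {set V}) : HEDG (subV W) :=
  MkHEDG
    [rel a b : subV W | dpath_via G W (val a) (val b)]
    [set F' : {set subV W} |
       [exists F in hcomplex G,
          (F \subset (val @: F') :|: W) &&
          [forall v in val @: F',
             (v \in F :\: W) || reached_from_via G W F v]]].

Local Open Scope classical_set_scope.
Local Open Scope ring_scope.

Section StandardBorel.
Variable R : realType.

(** A measurable space is standard Borel if its sigma-algebra is the Borel
    sigma-algebra of some Polish (separable, completely metrizable)
    topology; we express this through a complete separable metric
    generating the sigma-algebra. *)
Definition metric_open (T : Type) (dist : T -> T -> R) (A : set T) : Prop :=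
  forall x, A x -> exists e : R, 0 < e /\ forall y, dist x y < e -> A y.

Definition polish_metric d (T : measurableType d) (dist : T -> T -> R) : Prop :=
  (forall x y : T, dist x y = 0 <-> x = y) /\
      (forall x y : T, dist x y = dist y x) /\
      (forall x y z : T, dist x z <= dist x y + dist y z) /\
      (exists D : set T, countable D /\
         forall x (e : R), 0 < e -> exists y, D y /\ dist x y < e) /\
      (forall u : nat -> T,
         (forall e : R, 0 < e -> exists N, forall m n, (N <= m)%N -> (N <= n)%N ->
             dist (u m) (u n) < e) ->
         exists l : T, forall e : R, 0 < e -> exists N, forall n, (N <= n)%N ->
             dist (u n) l < e) /\
    (forall A : set T, measurable A <-> <<s metric_open dist >> A).

Definition standard_borel d (T : measurableType d) : Prop :=
  exists dist : T -> T -> R, polish_metric dist.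

End StandardBorel.

(** Product sigma-algebra on the dependent product prod_(i:I) T_i, generated
    by the measurable cylinders { x | x i \in B }. *)
Definition cylinders (I : Type) (dT : I -> measure_display)
    (T : forall i, measurableType (dT i)) : set (set (forall i, T i)) :=
  [set A | exists i (B : set (T i)), measurable B /\ A = (fun x => x i) @^-1` B].

Arguments cylinders {I dT} T.

Definition piT (I : Type) (dT : I -> measure_display)
    (T : forall i, measurableType (dT i)) :=
  g_sigma_algebraType (cylinders T).

Definition restr (V : finType) (W : {set V}) (dX : V -> measure_display)
    (X : forall v, measurableType (dX v)) (x : piT X) : piT (fun u : subV W => X (val u)) :=
  fun u => x (val u).

Arguments restr {V} W {dX} X x.

Definition marginal (R : realType) (V : finType) (W : {set V})
    (dX : V -> measure_display) (X : forall v, measurableType (dX v))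
    (P : set (piT X) -> \bar R) : set (piT (fun u : subV W => X (val u))) -> \bar R :=
  fun B => P (restr W X @^-1` B).

Arguments piT {I dT} T.
Arguments marginal {R V} W {dX} X P.

Definition mutually_independent (R : realType) dO (Omega : measurableType dO)
    (P : probability Omega R) (I : finType) (dE : I -> measure_display)
    (E : forall i, measurableType (dE i)) (Ev : forall i, Omega -> E i) : Prop :=
  forall A : forall i, set (E i), (forall i, measurable (A i)) ->
    P (\bigcap_(i in [set: I]) (Ev i @^-1` A i)) = (\prod_(i : I) P (Ev i @^-1` A i))%E.

Definition lsSEP (R : realType) (V : finType) (G : HEDG V)
    (dX : V -> measure_display) (X : forall v, measurableType (dX v))
    (PV : set (piT X) -> \bar R) : Prop :=
  exists (dO : measure_display) (Omega : measurableType dO) (P : probability Omega R)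
    (dE : Fidx G -> measure_display) (E : forall F, measurableType (dE F))
    (Ev : forall F, Omega -> E F)
    (f : forall v, piT X * piT E -> X v)
    (Xv : forall v, Omega -> X v),
  (forall F, standard_borel R (E F)) /\
  (forall F, measurable_fun setT (Ev F)) /\
  mutually_independent P Ev /\
  (forall v, measurable_fun setT (Xv v)) /\
  (* f_v is a measurable function of (x_{Pa(v)}, e_v), e_v = (e_F)_{F ∋ v},
     encoded as a measurable function of (x, e) depending only on these
     coordinates *)
  (forall v, measurable_fun setT (f v) /\
     forall (x x' : piT X) (e e' : piT E),
       (forall u, u \in pa G [set v]%SET -> x u = x' u) ->
       (forall F : Fidx G, v \in val F -> e F = e' F) ->
       f v (x, e) = f v (x', e')) /\
  (forall v, {ae P, forall w, Xv v w = f v ((fun u => Xv u w) : piT X,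
                                           (fun F => Ev F w) : piT E)}) /\
  (forall B : set (piT X), measurable B ->
     P ((fun w => (fun u => Xv u w) : piT X) @^-1` B) = PV B) /\
  (forall S : {set V}, loop G S -> forall v, v \in S ->
     exists g : piT X * piT E -> X v,
       measurable_fun setT g /\
       (forall (x x' : piT X) (e e' : piT E),
          (forall u, u \in (pa G S :\: S)%SET -> x u = x' u) ->
          (forall F : Fidx G, (val F :&: S != finset.set0)%SET -> e F = e' F) ->
          g (x, e) = g (x', e')) /\
       {ae P, forall w, Xv v w = g ((fun u => Xv u w) : piT X,
                                  (fun F => Ev F w) : piT E)}).

Arguments lsSEP {R V} G {dX} X PV.

From HB Require Import structures.
From mathcomp Require Import all_boot all_order all_algebra.
From mathcomp Require Import all_classical all_reals all_analysis.
Set Implicit Arguments. Unset Strict Implicit. Unset Printing Implicit Defensive.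
Import Order.TTheory GRing.Theory Num.Theory.
Local Open Scope classical_set_scope.
Local Open Scope ring_scope.

(* Marginalising W keeps the probability space and solves away the hidden
   nodes.  By induction on the number of W-ancestors, every node w of W is a.s.
   a measurable function of the non-W parents of its W-ancestors and of the
   noises of the faces meeting them: solve the strongly connected component of
   w inside W, a loop of G, and substitute the solutions of the W-nodes feeding
   it.  Substituting these solutions into the structural equations of G gives
   those of the marginal HEDG, where the noise of a maximal face F' is the
   vector of the noises of the maximal faces of G assigned to F' (F' contains
   their images); grouping preserves mutual independence (pi-lambda) and
   standard Borel spaces (sum metric).  A loop S' of the marginal lifts to the
   loop of G made of S' and of the W-nodes on hidden paths between its nodes,
   and the same substitution turns the solution of that loop into one of S'. *)

Lemma measurable_preimageT d d' (A : measurableType d) (B : measurableType d')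
    (f : A -> B) (Y : set B) :
  measurable_fun setT f -> measurable Y -> measurable (f @^-1` Y).
Proof. by move=> mf mY; rewrite -[_ @^-1` _]setTI; exact: mf. Qed.

Section ProductSpace.
Context (I : Type) (dT : I -> measure_display) (T : forall i, measurableType (dT i)).

Lemma measurable_piT_eval i : measurable_fun setT (fun x : piT T => x i).
Proof.
move=> _ B mB; rewrite setTI; apply: sub_sigma_algebra; by exists i, B.
Qed.

Lemma measurable_piT_fun d (A : measurableType d) (f : A -> piT T) :
  (forall i, measurable_fun setT (fun a => f a i)) -> measurable_fun setT f.
Proof.
move=> mf; apply: (@measurability _ _ A (piT T) setT f (cylinders T) erefl).
move=> _ [_ [i [B [mB ->]]] <-].
by have := mf i measurableT B mB; congr (measurable _).
Qed.

End ProductSpace.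

Section Boxes.
Context (K : finType) (dT : K -> measure_display) (T : forall k, measurableType (dT k)).

Definition piT_box (A : set (piT T)) := exists B : forall k, set (T k),
  (forall k, measurable (B k)) /\ A = [set x | forall k, B k (x k)].

Lemma piT_boxT : piT_box setT.
Proof. by exists (fun=> setT); split => //; apply/seteqP; split. Qed.

Lemma piT_boxI : setI_closed piT_box.
Proof.
move=> _ _ [B1 [mB1 ->]] [B2 [mB2 ->]]; exists (fun k => B1 k `&` B2 k); split.
  by move=> k; exact: measurableI.
apply/seteqP; split => x /=; first by move=> [h1 h2] k; split.
by move=> h; split => k; case: (h k).
Qed.

Lemma piT_box_measurable A : piT_box A -> measurable A.
Proof.
move=> [B [mB ->]].
have -> : [set x : piT T | forall k, B k (x k)] =
    \bigcap_(k in [set: K]) ((fun x : piT T => x k) @^-1` B k).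
  by apply/seteqP; split => x /= h k; [move=> _|]; exact: h.
apply: fin_bigcap_measurable => [|k _]; first exact: finite_finset.
by apply: measurable_preimageT (mB k); exact: measurable_piT_eval.
Qed.

Lemma cylinder_piT_box A : cylinders T A -> piT_box A.
Proof.
move=> [i [B0 [mB0 ->]]].
exists (fun k t => forall e : i = k, eq_rect i (fun k => set (T k)) B0 k e t); split.
  move=> k; case: (eqVneq i k) => [<-|ne].
    rewrite (_ : (fun t => _) = B0) //; apply/funext => t; apply/propext; split.
      by move=> /(_ erefl).
    by move=> h e; rewrite (eq_irrelevance e erefl).
  rewrite (_ : (fun t => _) = setT) //; apply/funext => t; apply/propext.
  by split => // _ e; exfalso; move: ne; rewrite e eqxx.
apply/seteqP; split => x /=; last by move=> /(_ i erefl).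
by move=> h k e; case: k / e.
Qed.

Lemma piT_measurable_boxE : @measurable _ (piT T) = <<s piT_box >>.
Proof.
apply/seteqP; split.
  apply: sub_sigma_algebra2; exact: cylinder_piT_box.
apply: smallest_sub; first exact: sigma_algebra_measurable.
exact: piT_box_measurable.
Qed.

End Boxes.

(** * Grouping independent random variables *)

(* The measures [S |-> P (Y @^-1` S `&` C)] and [S |-> P C * P (Y @^-1` S)]
   agree on the pi-system of boxes, hence everywhere by [measure_unique]. *)
Lemma box_product_rule_measurable (R : realType) dO (Omega : measurableType dO)
    (P : probability Omega R) (K : finType) (dT : K -> measure_display)
    (T : forall k, measurableType (dT k)) (Y : Omega -> piT T) (C : set Omega) :
  measurable_fun setT Y -> measurable C ->
  (forall S, piT_box S -> P (Y @^-1` S `&` C) = (P (Y @^-1` S) * P C)%E) ->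
  forall S, measurable S -> P (Y @^-1` S `&` C) = (P (Y @^-1` S) * P C)%E.
Proof.
move=> mY mC hbox S mS.
have PC_ge0 : (0 <= fine (P C))%R by rewrite fine_ge0.
have PC_fin : P C \is a fin_num by rewrite fin_num_measure.
have := @measure_unique _ R (piT T) (@piT_box _ _ _) (fun=> setT)
  (piT_measurable_boxE _) (@piT_boxI _ _ _) (fun=> piT_boxT _) (bigcup_const _ _)
  (pushforward (mrestr P mC) Y) (mscale (NngNum PC_ge0) (pushforward P Y)).
move=> /(_ (ex_intro _ 0%N Logic.I) mY mY _ _ S mS) unique.
suff : P (Y @^-1` S `&` C) = ((fine (P C))%:E * P (Y @^-1` S))%E.
  by rewrite fineK // muleC.
apply: unique => [A bA|_].
  change (P (Y @^-1` A `&` C) = ((fine (P C))%:E * P (Y @^-1` A))%E).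
  by rewrite fineK // muleC; exact: hbox.
change (P (Y @^-1` setT `&` C) < +oo)%E.
apply: (le_lt_trans (probability_le1 _ _)); last exact: ltry.
exact: measurableI (measurable_preimageT mY measurableT) mC.
Qed.

Section FiberIndependence.
Context (R : realType) dO (Omega : measurableType dO) (P : probability Omega R)
  (I J : finType) (dE : I -> measure_display) (E : forall i, measurableType (dE i))
  (Ev : forall i, Omega -> E i) (a : I -> J).
Hypothesis mEv : forall i, measurable_fun setT (Ev i).
Hypothesis indep : mutually_independent P Ev.

Definition fiber (j : J) : finType := {i : I | a i == j}.

Definition fiber_vec j (w : Omega) : piT (fun k : fiber j => E (val k)) :=
  fun k => Ev (val k) w.
Arguments fiber_vec : clear implicits.

Lemma measurable_fiber_vec j : measurable_fun setT (fiber_vec j).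
Proof. by apply: measurable_piT_fun => k; exact: mEv. Qed.

Definition fiber_product_rule (A : forall j, set (piT (fun k : fiber j => E (val k)))) :=
  P (\bigcap_(j in [set: J]) (fiber_vec j @^-1` A j)) =
  (\prod_j P (fiber_vec j @^-1` A j))%E.

Lemma fiber_product_rule_boxes A : (forall j, piT_box (A j)) -> fiber_product_rule A.
Proof.
move=> /(_ _) /cid hA; pose B j := projT1 (hA j).
have mB j k : measurable (B j k) by case: (projT2 (hA j)).
have -> : A = fun j => [set x | forall k, B j k (x k)].
  by apply: functional_extensionality_dep => j; case: (projT2 (hA j)).
pose C i : set (E i) := B (a i) (exist _ i (eqxx (a i))).
have fiberE j w : (forall k : fiber j, B j k (Ev (val k) w)) <->
    (forall i, a i == j -> C i (Ev i w)).
  split => [h i /eqP aij|h [i aij] /=]; first by subst j; exact: h.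
  by have := h i aij; move/eqP: (aij) => ?; subst j; rewrite (eq_irrelevance aij (eqxx _)).
have fiberP j : P (fiber_vec j @^-1` [set x | forall k, B j k (x k)]) =
    (\prod_(i | a i == j) P (Ev i @^-1` C i))%E.
  pose D i := if a i == j then C i else setT.
  have -> : fiber_vec j @^-1` [set x | forall k, B j k (x k)] =
      \bigcap_(i in [set: I]) (Ev i @^-1` D i).
    apply/seteqP; split => w /=.
      by move=> /fiberE h i _; rewrite /D; case: ifP => // /h.
    by move=> h; apply/fiberE => i aij; have := h i Logic.I; rewrite /D aij.
  rewrite indep => [|i]; last by rewrite /D; case: ifP => _ //; exact: mB.
  rewrite [RHS]big_mkcond /=; apply: eq_bigr => i _; rewrite /D.
  by case: ifP => //; rewrite preimage_setT probability_setT.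
rewrite /fiber_product_rule (eq_bigr _ (fun j _ => fiberP j)).
have -> : \bigcap_(j in [set: J]) (fiber_vec j @^-1` [set x | forall k, B j k (x k)]) =
    \bigcap_(i in [set: I]) (Ev i @^-1` C i).
  apply/seteqP; split => w /= h.
    by move=> i _; have /fiberE := h (a i) Logic.I; apply; exact: eqxx.
  by move=> j _; apply/fiberE => i _; exact: h.
rewrite indep => [|i]; last exact: mB.
exact: partition_big.
Qed.

(* Induction on the number of coordinates [j] where [A j] is not a box; the
   last one, [j0], is handled by [box_product_rule_measurable] with [C] the
   event on the other coordinates. *)
Lemma fiber_product_rule_ind n (K : {set J}) A : (#|K| <= n)%N ->
  (forall j, j \in K -> measurable (A j)) -> (forall j, j \notin K -> piT_box (A j)) ->
  fiber_product_rule A.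
Proof.
elim: n K A => [|n IH] K A hK hm hb; have [K0|[j0 j0K]] := set_0Vmem K.
- by apply: fiber_product_rule_boxes => j; apply: hb; rewrite K0 inE.
- by move: hK; rewrite leqn0 cards_eq0 => /eqP K0; rewrite K0 inE in j0K.
- by apply: fiber_product_rule_boxes => j; apply: hb; rewrite K0 inE.
have mA j : measurable (A j).
  by case: (boolP (j \in K)) => jK; [exact: hm | apply: piT_box_measurable; exact: hb].
pose rest := \bigcap_(j in [set j | j != j0]) (fiber_vec j @^-1` A j).
have mrest : measurable rest.
  apply: fin_bigcap_measurable => [|j _]; first exact: finite_finset.
  by apply: measurable_preimageT; [exact: measurable_fiber_vec | exact: mA].
pose c := (\prod_(j | j != j0) P (fiber_vec j @^-1` A j))%E.
have capE S : \bigcap_(j in [set: J]) (fiber_vec j @^-1` dfwith A j0 S j) =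
    fiber_vec j0 @^-1` S `&` rest.
  apply/seteqP; split => w /=.
    move=> h; split; first by have := h j0 Logic.I; rewrite dfwithin.
    by move=> j /= ne; have := h j Logic.I; rewrite dfwithout // eq_sym.
  by move=> [h1 h2] j _; case: dfwithP => // j' ne; apply: h2; rewrite /= eq_sym.
have prodE S : (\prod_j P (fiber_vec j @^-1` dfwith A j0 S j))%E =
    (P (fiber_vec j0 @^-1` S) * c)%E.
  rewrite (bigD1 j0) //= dfwithin; congr (_ * _)%E.
  by apply: eq_bigr => j ne; rewrite dfwithout // eq_sym.
have boxP S : piT_box S ->
    P (fiber_vec j0 @^-1` S `&` rest) = (P (fiber_vec j0 @^-1` S) * c)%E.
  move=> bS; rewrite -capE -prodE; apply: (IH (K :\ j0)).
  - by move: hK; rewrite (cardsD1 j0 K) j0K add1n ltnS.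
  - by move=> j; rewrite !inE => /andP [ne jK]; rewrite dfwithout 1?eq_sym //; exact: hm.
  - move=> j; rewrite !inE negb_and negbK; case: dfwithP => // j' ne.
    by rewrite eq_sym (negbTE ne) => /hb.
have restP : P rest = c.
  by have := boxP _ (piT_boxT _); rewrite preimage_setT setTI probability_setT mul1e.
have AE : dfwith A j0 (A j0) = A.
  by apply: functional_extensionality_dep => j; case: dfwithP.
rewrite -AE /fiber_product_rule capE prodE -restP.
apply: box_product_rule_measurable => // [|S bS]; first exact: measurable_fiber_vec.
by rewrite restP; exact: boxP.
Qed.

Lemma mutually_independent_fibers : mutually_independent P fiber_vec.
Proof.
move=> A mA; apply: (@fiber_product_rule_ind _ finset.setT) => // j.
by rewrite inE.
Qed.

End FiberIndependence.
Arguments fiber_vec {dO Omega I J dE E} Ev a j w.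

Section PolishMetric.
Context (R : realType) d (T : measurableType d) (dist : T -> T -> R).
Hypothesis hd : polish_metric dist.

Lemma polish_dist_eq0 x y : dist x y = 0 <-> x = y. Proof. by case: hd. Qed.

Lemma polish_distC x y : dist x y = dist y x. Proof. by case: hd => _ []. Qed.

Lemma polish_dist_triangle x y z : dist x z <= dist x y + dist y z.
Proof. by case: hd => _ [_ []]. Qed.

Lemma polish_distxx x : dist x x = 0. Proof. exact/polish_dist_eq0. Qed.

Lemma polish_dist_ge0 x y : 0 <= dist x y.
Proof.
have := polish_dist_triangle x y x; rewrite polish_distxx (polish_distC y x) => h.
by rewrite -(@pmulr_rge0 _ 2) // mulr2n mulrDl mul1r.
Qed.

Lemma polish_separable : exists D : set T, countable D /\
  forall x (e : R), 0 < e -> exists y, D y /\ dist x y < e.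
Proof. by case: hd => _ [_ [_ [h _]]]. Qed.

Lemma polish_complete (u : nat -> T) :
  (forall e : R, 0 < e -> exists N, forall m n, (N <= m)%N -> (N <= n)%N ->
     dist (u m) (u n) < e) ->
  exists l : T, forall e : R, 0 < e -> exists N, forall n, (N <= n)%N -> dist (u n) l < e.
Proof. by case: hd => _ [_ [_ [_ [h _]]]]; exact: h. Qed.

Lemma polish_measurableE (A : set T) : measurable A <-> <<s metric_open dist >> A.
Proof. by case: hd => _ [_ [_ [_ [_ h]]]]. Qed.

Lemma measurable_polish_ball c r : measurable [set t | dist c t < r].
Proof.
apply/polish_measurableE; apply: sub_sigma_algebra => t /= ht.
exists (r - dist c t); split => [|y hy]; first by rewrite subr_gt0.
by apply: le_lt_trans (polish_dist_triangle c t y) _; rewrite -ltrBrDl.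
Qed.

End PolishMetric.

Lemma sumr_lt_div_card (R : realType) (K : finType) (f : K -> R) e : 0 < e ->
  (forall k, 0 <= f k) -> (forall k, f k < e / (#|K|%:R + 1)) -> \sum_k f k < e.
Proof.
move=> e0 f0 hf; apply: le_lt_trans (ler_sum _ (fun k _ => ltW (hf k))) _.
rewrite sumr_const (_ : #|xpredT| = #|K|) // -[_ *+ #|K|]mulr_natr mulrAC.
by rewrite ltr_pdivrMr ?ltr_wpDl // mulrDr mulr1 ltrDl.
Qed.

Section ProductPolish.
Context (R : realType) (K : finType) (dT : K -> measure_display)
  (T : forall k, measurableType (dT k)) (dist : forall k, T k -> T k -> R).
Arguments dist : clear implicits.
Hypothesis hd : forall k, polish_metric (dist k).

Let N := #|K|.

Definition sum_dist (x y : piT T) : R := \sum_k dist k (x k) (y k).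

Lemma le_dist_sum_dist k x y : dist k (x k) (y k) <= sum_dist x y.
Proof.
rewrite /sum_dist (bigD1 k) //= lerDl.
by apply: sumr_ge0 => j _; exact: polish_dist_ge0.
Qed.

Lemma sum_dist_eq0 x y : sum_dist x y = 0 <-> x = y.
Proof.
split => [h|->]; last by rewrite /sum_dist big1 // => k _; exact: polish_distxx.
apply: functional_extensionality_dep => k; apply/(polish_dist_eq0 (hd k)).
by apply/eqP; rewrite eq_le polish_dist_ge0 // andbT -h le_dist_sum_dist.
Qed.

Lemma sum_distC x y : sum_dist x y = sum_dist y x.
Proof. by apply: eq_bigr => k _; exact: polish_distC. Qed.

Lemma sum_dist_triangle x y z : sum_dist x z <= sum_dist x y + sum_dist y z.
Proof.
by rewrite /sum_dist -big_split; apply: ler_sum => k _; exact: polish_dist_triangle.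
Qed.

Lemma sum_dist_separable : exists D : set (piT T), countable D /\
  forall x (e : R), 0 < e -> exists y, D y /\ sum_dist x y < e.
Proof.
have /(_ _) /cid Dk := fun k => polish_separable (hd k).
have /(_ _) /cid inj k : exists f : T k -> nat, {in projT1 (Dk k) &, injective f}.
  by apply/countable_injP; case: (projT2 (Dk k)).
exists [set x | forall k, projT1 (Dk k) (x k)]; split.
  apply/countable_injP; exists (fun x => pickle [ffun k => projT1 (inj k) (x k)]).
  move=> x y; rewrite !inE => hx hy /(pcan_inj pickleK) /ffunP h.
  apply: functional_extensionality_dep => k; have := h k; rewrite !ffunE.
  by apply: (projT2 (inj k)); rewrite inE.
move=> x e e0; have e'0 : 0 < e / (N%:R + 1) by rewrite divr_gt0 // ltr_wpDl.
have /(_ _) /cid y k : exists y, projT1 (Dk k) y /\ dist k (x k) y < e / (N%:R + 1).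
  by case: (projT2 (Dk k)) => _ /(_ (x k) _ e'0).
exists (fun k => projT1 (y k)); split => [k|]; first by case: (projT2 (y k)).
apply: sumr_lt_div_card => // k; first exact: polish_dist_ge0.
by case: (projT2 (y k)).
Qed.

Lemma sum_dist_complete (u : nat -> piT T) :
  (forall e : R, 0 < e -> exists M, forall m n, (M <= m)%N -> (M <= n)%N ->
     sum_dist (u m) (u n) < e) ->
  exists l : piT T, forall e : R, 0 < e ->
    exists M, forall n, (M <= n)%N -> sum_dist (u n) l < e.
Proof.
move=> u_cauchy.
have /(_ _) /cid l k : exists l : T k, forall e : R, 0 < e ->
    exists M, forall n, (M <= n)%N -> dist k (u n k) l < e.
  apply: (polish_complete (hd k)) => e e0; have [M hM] := u_cauchy e e0.
  by exists M => m n hm hn; exact: le_lt_trans (le_dist_sum_dist _ _ _) (hM m n hm hn).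
exists (fun k => projT1 (l k)) => e e0.
have e'0 : 0 < e / (N%:R + 1) by rewrite divr_gt0 // ltr_wpDl.
have /(_ _) /cid M k := projT2 (l k) _ e'0.
exists (\max_k projT1 (M k))%N => n hn.
apply: sumr_lt_div_card => // k; first exact: polish_dist_ge0.
by apply: (projT2 (M k)); apply: leq_trans hn; exact: leq_bigmax.
Qed.

Definition ball_box (c : piT T) (r : R) :=
  [set y : piT T | forall k, dist k (c k) (y k) < r].

Lemma measurable_ball_box c r : measurable (ball_box c r).
Proof.
apply: piT_box_measurable; exists (fun k => [set t | dist k (c k) t < r]).
by split => // k; exact: measurable_polish_ball.
Qed.

Lemma cylinders_sub_sum_dist_sigma : cylinders T `<=` <<s metric_open sum_dist >>.
Proof.
move=> _ [k [B [mB ->]]].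
have hB := (polish_measurableE (hd k) B).1 mB.
have : <<s setT, preimage_set_system setT (fun x : piT T => x k) (metric_open (dist k)) >>
    (setT `&` (fun x : piT T => x k) @^-1` B).
  by rewrite g_sigma_preimageE; exists B.
rewrite setTI; apply: sub_sigma_algebra2 => _ [B' oB' <-]; rewrite setTI => x /= hx.
have [e [e0 he]] := oB' _ hx; exists e; split => // y hy; apply: he.
exact: le_lt_trans (le_dist_sum_dist _ _ _) hy.
Qed.

(* Every open set is the countable union of the boxes of radius [1/(m+1)]
   centred in a countable dense set that it contains. *)
Lemma sum_dist_open_measurable U : metric_open sum_dist U -> measurable U.
Proof.
move=> oU; have [D [cD dD]] := sum_dist_separable.
have [f finj] : exists f : piT T -> nat, {in D &, injective f} by apply/countable_injP.
pose rr (m : nat) : R := m.+1%:R^-1.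
pose Idx := {p : piT T * nat | D p.1 /\ ball_box p.1 (rr p.2) `<=` U}.
have -> : U = \bigcup_(i : Idx) ball_box (sval i).1 (rr (sval i).2).
  apply/seteqP; split; last by move=> y [[[c m] /= [_ sub]] _]; exact: sub.
  move=> x hx; have [e [e0 he]] := oU x hx.
  pose m := Num.truncn (N.+1%:R / e).
  have hm : N.+1%:R / e < m.+1%:R := truncnS_gt _.
  have rm0 : 0 < rr m by rewrite invr_gt0.
  have [c [Dc hc]] := dD x _ rm0.
  have sub : ball_box c (rr m) `<=` U.
    move=> y hy; apply: he; apply: le_lt_trans (sum_dist_triangle x c y) _.
    have cy : sum_dist c y <= rr m *+ N.
      apply: le_trans (ler_sum _ (fun k _ => ltW (hy k))) _.
      by rewrite sumr_const (_ : #|xpredT| = #|K|) //.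
    apply: (@lt_le_trans _ _ (rr m + rr m *+ N)); first exact: ltr_leD.
    by rewrite -mulrS -mulr_natr mulrC ltW // ltr_pdivrMr // mulrC -ltr_pdivrMr.
  exists (exist _ (c, m) (conj Dc sub)) => //= k.
  by rewrite polish_distC //; exact: le_lt_trans (le_dist_sum_dist _ _ _) hc.
apply: countable_bigcupT_measurable => [|i]; last exact: measurable_ball_box.
apply/countable_injP; exists (fun i : Idx => pickle (f (sval i).1, (sval i).2)).
move=> [[c m] [Dc s1]] [[c' m'] [Dc' s2]] _ _ /= /(pcan_inj pickleK) [ef em].
have ec : c = c' by apply: finj; rewrite ?inE.
by subst c' m'; congr exist; exact: Prop_irrelevance.
Qed.

Lemma sum_dist_measurableE (A : set (piT T)) :
  measurable A <-> <<s metric_open sum_dist >> A.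
Proof.
split.
  exact: smallest_sub (@smallest_sigma_algebra _ _ _) cylinders_sub_sum_dist_sigma A.
apply: smallest_sub (@sigma_algebra_measurable _ (piT T)) _ A.
exact: sum_dist_open_measurable.
Qed.

Lemma polish_sum_dist : polish_metric sum_dist.
Proof.
split; first exact: sum_dist_eq0.
split; first exact: sum_distC.
split; first exact: sum_dist_triangle.
split; first exact: sum_dist_separable.
split; first exact: sum_dist_complete.
exact: sum_dist_measurableE.
Qed.

End ProductPolish.

Lemma standard_borel_piT (R : realType) (K : finType) (dT : K -> measure_display)
    (T : forall k, measurableType (dT k)) :
  (forall k, standard_borel R (T k)) -> standard_borel R (piT T).
Proof.
move=> /(_ _) /cid dist; exists (sum_dist (fun k => projT1 (dist k))).
by apply: polish_sum_dist => k; exact: (projT2 (dist k)).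
Qed.

(** * Solving the hidden nodes *)

Section Dependence.
Context (I J : Type) (dA : I -> measure_display) (A : forall i, measurableType (dA i))
  (dB : J -> measure_display) (B : forall j, measurableType (dB j)) (T : Type).

Definition depends_only_on (U : pred I) (Fs : pred J) (h : piT A * piT B -> T) :=
  forall (x x' : piT A) (e e' : piT B), (forall i, U i -> x i = x' i) ->
    (forall j, Fs j -> e j = e' j) -> h (x, e) = h (x', e').

Lemma depends_only_on_sub (U U' : pred I) (Fs Fs' : pred J) h :
  (forall i, U i -> U' i) -> (forall j, Fs j -> Fs' j) ->
  depends_only_on U Fs h -> depends_only_on U' Fs' h.
Proof.
move=> sU sFs dh x x' e e' hx he.
by apply: dh => [i /sU|j /sFs]; [exact: hx | exact: he].
Qed.

End Dependence.

Section Substitution.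
Context (R : realType) (V : finType) (dX : V -> measure_display)
  (X : forall v, measurableType (dX v)) (J : Type) (dE : J -> measure_display)
  (E : forall j, measurableType (dE j)).

Definition subst (Us : {set V}) (hh : forall u, piT X * piT E -> X u)
    (z : piT X * piT E) : piT X :=
  fun u => if u \in Us then hh u z else z.1 u.

Lemma measurable_subst (Us : {set V}) (hh : forall u, piT X * piT E -> X u) :
  (forall u, u \in Us -> measurable_fun setT (hh u)) -> measurable_fun setT (subst Us hh).
Proof.
move=> mhh; apply: measurable_piT_fun => u; rewrite /subst.
case: (boolP (u \in Us)) => uUs; first exact: mhh.
exact: measurableT_comp (@measurable_piT_eval _ _ X u) measurable_fst.
Qed.

Lemma depends_only_on_subst T (Us : {set V}) (hh : forall u, piT X * piT E -> X u)
    (U0 U : pred V) (Fs0 Fs : pred J) (g : piT X * piT E -> T) :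
  depends_only_on U0 Fs0 g ->
  (forall u, u \in Us -> U0 u -> depends_only_on U Fs (hh u)) ->
  (forall u, U0 u -> u \notin Us -> U u) -> (forall j, Fs0 j -> Fs j) ->
  depends_only_on U Fs (fun z => g (subst Us hh z, z.2)).
Proof.
move=> dg dhh sU sFs x x' e e' hx he /=.
apply: dg => [u U0u|j /sFs]; last exact: he.
by rewrite /subst /=; case: ifPn => uUs; [exact: dhh | apply: hx; exact: sU].
Qed.

Context dO (Omega : measurableType dO) (P : probability Omega R).

Definition outcome (Xv : forall v, Omega -> X v) (Ev : forall j, Omega -> E j)
    (w : Omega) : piT X * piT E :=
  ((fun v => Xv v w), (fun j => Ev j w)).

Lemma subst_outcome_ae Xv Ev (Us : {set V}) (hh : forall u, piT X * piT E -> X u) :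
  (forall u, u \in Us -> {ae P, forall w, Xv u w = hh u (outcome Xv Ev w)}) ->
  {ae P, forall w, subst Us hh (outcome Xv Ev w) = (outcome Xv Ev w).1}.
Proof.
move=> hae.
have : {ae P, forall w u, u \in Us -> Xv u w = hh u (outcome Xv Ev w)}.
  apply: filter_forall => u; case: (boolP (u \in Us)) => uUs; last exact: nearW.
  by apply: filterS (hae u uUs) => w h _.
apply: filterS => w h; apply: functional_extensionality_dep => u.
by rewrite /subst; case: ifPn => // /h.
Qed.

End Substitution.

Definition loop_solvable (R : realType) (V : finType) (G : HEDG V)
    (dX : V -> measure_display) (X : forall v, measurableType (dX v))
    (dE : Fidx G -> measure_display) (E : forall F, measurableType (dE F))
    dO (Omega : measurableType dO) (P : probability Omega R)
    (Xv : forall v, Omega -> X v) (Ev : forall F, Omega -> E F) :=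
  forall S : {set V}, loop G S -> forall v, v \in S ->
    exists g : piT X * piT E -> X v,
      measurable_fun setT g /\
      depends_only_on (fun u => u \in pa G S :\: S)
        (fun F : Fidx G => val F :&: S != finset.set0)%SET g /\
      {ae P, forall w, Xv v w = g (outcome Xv Ev w)}.

Lemma connect_between (T : finType) (e : rel T) a b : connect e a b ->
  connect [rel x y | [&& connect e a x, connect e x b, connect e a y,
                         connect e y b & e x y]] a b.
Proof.
move=> /connectP [p pth lst].
suff H q x : connect e a x -> path e x q -> last x q = b ->
    connect [rel x y | [&& connect e a x, connect e x b, connect e a y,
                           connect e y b & e x y]] x b.
  by apply: H pth (esym lst); exact: connect0.
elim: q x => [|y q IH] x ax /=; first by move=> _ ->; exact: connect0.
move=> /andP [exy pq] lq.
have ay : connect e a y := connect_trans ax (connect1 exy).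
have yb : connect e y b by apply/connectP; exists q.
apply: connect_trans (IH y ay pq lq); apply: connect1 => /=.
by rewrite ax ay yb exy (connect_trans (connect1 exy) yb).
Qed.

Lemma homo_connect (T T' : finType) (e : rel T) (e' : rel T') (f : T -> T') :
  (forall x y, e x y -> connect e' (f x) (f y)) ->
  forall x y, connect e x y -> connect e' (f x) (f y).
Proof.
move=> h x y /connectP [p pth ->]; elim: p x pth => [|z p IH] x /=.
  by move=> _; exact: connect0.
by move=> /andP [exz pz]; exact: connect_trans (h _ _ exz) (IH _ pz).
Qed.

Lemma maxfaces_sup (V : finType) (G : HEDG V) A : A \in hcomplex G ->
  exists2 F, F \in maxfaces G & A \subset F.
Proof.
move=> AH; have [|F /andP [FH AF] Fmax] :=
  @arg_maxnP _ A (fun F => (F \in hcomplex G) && (A \subset F)) (fun F => #|F|).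
  by rewrite AH subxx.
exists F => //; rewrite inE FH /=; apply/forallP => F'; apply/implyP => F'H.
apply/implyP => FF'; rewrite eq_sym eqEcard FF' /=; apply: Fmax.
by rewrite F'H (fintype.subset_trans AF).
Qed.

Section SolveW.
Context (R : realType) (V : finType) (G : HEDG V) (dX : V -> measure_display)
  (X : forall v, measurableType (dX v)) (W : {set V})
  (dO : measure_display) (Omega : measurableType dO) (P : probability Omega R)
  (dE : Fidx G -> measure_display) (E : forall F, measurableType (dE F))
  (Ev : forall F, Omega -> E F) (Xv : forall v, Omega -> X v).
Hypothesis hloop : loop_solvable P Xv Ev.

Definition ancestorsW (w : V) : {set V} := [set u in W | connect (edgeW G W) u w].

Definition inputsW (w : V) : {set V} :=
  [set u | (u \notin W) && [exists a in ancestorsW w, hedge G u a]].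

Definition meets_ancestorsW (w : V) (F : Fidx G) : bool :=
  [exists a in ancestorsW w, a \in val F].

Definition solves (w : V) (h : piT X * piT E -> X w) : Prop :=
  [/\ measurable_fun setT h,
      depends_only_on (fun u => u \in inputsW w) (meets_ancestorsW w) h
    & {ae P, forall o, Xv w o = h (outcome Xv Ev o)}].
Arguments solves : clear implicits.

Lemma edgeW_in x y : edgeW G W x y -> [/\ x \in W, y \in W & hedge G x y].
Proof. by move=> /and3P. Qed.

Lemma ancestorsW_self w : w \in W -> w \in ancestorsW w.
Proof. by move=> wW; rewrite inE wW connect0. Qed.

Lemma ancestorsW_trans u w a :
  u \in ancestorsW w -> a \in ancestorsW u -> a \in ancestorsW w.
Proof.
by rewrite !inE => /andP [_ uw] /andP [-> au]; exact: connect_trans au uw.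
Qed.

Lemma ancestorsW_edge u a w : u \in W -> hedge G u a -> a \in ancestorsW w ->
  u \in ancestorsW w.
Proof.
rewrite !inE => uW ua /andP [aW aw]; rewrite uW.
by apply: connect_trans aw; apply: connect1; rewrite /edgeW /= uW aW.
Qed.

Lemma depends_only_on_ancestor u w (h : piT X * piT E -> X u) :
  u \in ancestorsW w ->
  depends_only_on (fun y => y \in inputsW u) (meets_ancestorsW u) h ->
  depends_only_on (fun y => y \in inputsW w) (meets_ancestorsW w) h.
Proof.
move=> uw; apply: depends_only_on_sub => [y|F] /=.
  rewrite !inE => /andP [-> /existsP [a /andP [au ya]]].
  by apply/existsP; exists a; rewrite ya (ancestorsW_trans uw au).
move=> /existsP [a /andP [au aF]].
by apply/existsP; exists a; rewrite aF (ancestorsW_trans uw au).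
Qed.

Definition sccW (w : V) : {set V} := [set a in ancestorsW w | connect (edgeW G W) w a].

Lemma sccW_self w : w \in W -> w \in sccW w.
Proof. by move=> wW; rewrite inE ancestorsW_self // connect0. Qed.

Lemma sccW_loop w : w \in W -> loop G (sccW w).
Proof.
move=> wW; apply/andP; split; first by apply/set0Pn; exists w; exact: sccW_self.
apply/forallP => a; apply/implyP; rewrite !inE => /andP [/andP [aW aw] wa].
apply/forallP => b; apply/implyP; rewrite !inE => /andP [/andP [bW bw] wb].
move: (connect_between (connect_trans aw wb)); apply: connect_sub.
move=> x y /= /and5P [ax xb ay yb /edgeW_in [xW yW xy]].
apply: connect1; rewrite /= !inE xW yW xy.
rewrite (connect_trans xb bw) (connect_trans wa ax).
by rewrite (connect_trans yb bw) (connect_trans wa ay).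
Qed.

Definition lowerW (w : V) : {set V} := [set u in ancestorsW w | u \notin sccW w].

Lemma lowerW_proper u w : w \in W -> u \in lowerW w ->
  ancestorsW u \proper ancestorsW w.
Proof.
move=> wW; rewrite inE => /andP [uw uS]; rewrite finset.properEneq.
apply/andP; split; last by apply/fintype.subsetP => a; exact: ancestorsW_trans uw.
apply: contra uS => /eqP Aeq; rewrite inE uw /=.
by have := ancestorsW_self wW; rewrite -Aeq inE => /andP [].
Qed.

Lemma pa_sccW_inputsW w u : u \in pa G (sccW w) :\: sccW w -> u \notin lowerW w ->
  u \in inputsW w.
Proof.
rewrite finset.in_setD => /andP [uS].
rewrite [u \in pa _ _]inE => /existsP [s /andP [sS us]].
have sA : s \in ancestorsW w by move: sS; rewrite inE => /andP [].
case: (boolP (u \in W)) => [uW|uW _]; first by rewrite inE (ancestorsW_edge uW us sA) uS.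
by rewrite inE uW; apply/existsP; exists s; rewrite sA.
Qed.

Lemma meets_sccW w (F : Fidx G) : (val F :&: sccW w != finset.set0)%SET ->
  meets_ancestorsW w F.
Proof.
move=> /set0Pn [s]; rewrite finset.in_setI inE => /andP [sF /andP [sA _]].
by apply/existsP; exists s; rewrite sF sA.
Qed.

(* The strongly connected
   component of [w] inside [W] is a loop of [G]; the W-nodes among its parents
   have strictly fewer W-ancestors, and substituting their solutions into the
   solution of the loop leaves a function of the inputs of [w] only. *)
Lemma exists_solution w : w \in W -> exists h, solves w h.
Proof.
move=> wW; have [n] := ubnP #|ancestorsW w|; elim: n w wW => // n IH w wW /ltnSE le_n.
have [g [mg [dg gae]]] := hloop (sccW_loop wW) (sccW_self wW).
have /(_ _) /cid hh u : exists h, u \in lowerW w -> solves u h.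
  case: (boolP (u \in lowerW w)) => uL; last by exists (fun z => z.1 u).
  have uW : u \in W by move: uL; rewrite !inE => /andP [/andP []].
  have [|h sol] := IH u uW; last by exists h.
  exact: leq_trans (proper_card (lowerW_proper wW uL)) le_n.
pose sol u := projT1 (hh u).
have solP u : u \in lowerW w -> solves u (sol u) := projT2 (hh u).
exists (fun z => g (subst (lowerW w) sol z, z.2)); split.
- apply: measurableT_comp mg _; apply: measurable_fun_pair => //.
  by apply: measurable_subst => u /solP [].
- apply: depends_only_on_subst dg _ _ (@meets_sccW w) => [u uL _|u]; last first.
    exact: pa_sccW_inputsW.
  have [_ du _] := solP u uL; apply: depends_only_on_ancestor du.
  by move: uL; rewrite inE => /andP [].
- have sol_ae u : u \in lowerW w -> {ae P, forall o, Xv u o = sol u (outcome Xv Ev o)}.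
    by move=> /solP [].
  by apply: filterS2 gae (subst_outcome_ae sol_ae) => o -> ->.
Qed.

Lemma exists_solutions : exists sol : forall u, piT X * piT E -> X u,
  forall u, u \in W -> solves u (sol u).
Proof.
have /(_ _) /cid sol u : exists h, u \in W -> solves u h.
  case: (boolP (u \in W)) => uW; last by exists (fun z => z.1 u).
  by have [h ?] := exists_solution uW; exists h.
by exists (fun u => projT1 (sol u)) => u; exact: (projT2 (sol u)).
Qed.

End SolveW.
Arguments solves {R V G dX X} W {dO Omega} P {dE E} Ev Xv w h.

(** * Faces and loops of the marginal HEDG *)

Definition marg_face (V : finType) (G : HEDG V) (W : {set V}) (F : Fidx G) : {set subV W} :=
  [set u' : subV W | (val u' \in val F) || reached_from_via G W (val F) (val u')].

Lemma marg_face_in (V : finType) (G : HEDG V) (W : {set V}) (F : Fidx G) :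
  marg_face W F \in hcomplex (marg G W).
Proof.
have FH : val F \in hcomplex G by case: F => F /=; rewrite inE => /andP [].
rewrite inE; apply/existsP; exists (val F); rewrite FH /=; apply/andP; split.
  apply/fintype.subsetP => v vF; rewrite inE; case: (boolP (v \in W)) => vW.
    by rewrite orbT.
  by rewrite orbF; apply/imsetP; exists (exist _ v vW); rewrite // inE /= vF.
apply/forallP => v; apply/implyP => /imsetP [u' + ->].
by rewrite !inE => /orP [uF|->]; rewrite ?orbT // uF (valP u').
Qed.

Lemma exists_marg_maxface (V : finType) (G : HEDG V) (W : {set V}) :
  exists asg : Fidx G -> Fidx (marg G W), forall F, marg_face W F \subset val (asg F).
Proof.
have asg (F : Fidx G) : {F' | F' \in maxfaces (marg G W) & marg_face W F \subset F'}.
  by apply: cid2; exact: maxfaces_sup (marg_face_in W F).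
by exists (fun F => exist _ (s2val (asg F)) (s2valP (asg F))) => F; exact: s2valP' (asg F).
Qed.

Section LoopLift.
Context (V : finType) (G : HEDG V) (W : {set V}) (S' : {set subV W}).
Local Notation M := (marg G W).

Definition valS : {set V} := [set val u' | u' in S'].

Definition reachesS (z : V) : bool :=
  [exists b in valS, [exists ur, [&& ur \in W, connect (edgeW G W) z ur & hedge G ur b]]].

Definition reachedS (z : V) : bool :=
  [exists a in valS, [exists u1, [&& u1 \in W, hedge G a u1 & connect (edgeW G W) u1 z]]].

(* [S'] together with the hidden nodes on paths between its nodes. *)
Definition loopW : {set V} := valS :|: [set z in W | reachedS z && reachesS z].

Lemma loopW_cases s : s \in loopW -> (s \in valS) || ((s \in W) && reachesS s).
Proof. by rewrite !inE => /orP [->|/andP [-> /andP [_ ->]]]; rewrite ?orbT. Qed.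

Lemma valS_loopW s : s \in valS -> s \in loopW.
Proof. by rewrite inE => ->. Qed.

Lemma reachesS_edge u s : u \in W -> s \in loopW -> hedge G u s -> reachesS u.
Proof.
move=> uW /loopW_cases /orP [sS us|/andP [sW /existsP [b /andP [bS]]]].
  by apply/existsP; exists s; rewrite sS; apply/existsP; exists u; rewrite uW connect0.
move=> /existsP [ur /and3P [urW sur urb]] us; apply/existsP; exists b.
rewrite bS; apply/existsP; exists ur; rewrite urW urb andbT; apply: connect_trans sur.
by apply: connect1; rewrite /edgeW /= uW sW.
Qed.

Lemma pa_loopW_reachesS a : a \in W -> a \in pa G loopW -> reachesS a.
Proof.
by move=> aW; rewrite inE => /existsP [s /andP [sS as_]]; exact: reachesS_edge as_.
Qed.

Lemma reachesS_ancestor a u : a \in ancestorsW G W u -> reachesS u -> reachesS a.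
Proof.
rewrite inE => /andP [aW au] /existsP [b /andP [bS /existsP [ur /and3P [urW uur urb]]]].
apply/existsP; exists b; rewrite bS; apply/existsP; exists ur; rewrite urW urb andbT.
exact: connect_trans au uur.
Qed.

Lemma reachesS_dpath z a : hedge G z a -> a \in W -> reachesS a ->
  exists2 b, b \in valS & dpath_via G W z b.
Proof.
move=> za aW /existsP [b /andP [bS /existsP [ur /and3P [urW aur urb]]]].
exists b => //; apply/orP; right; apply/existsP; exists a; apply/existsP; exists ur.
by rewrite aW urW za aur urb.
Qed.

Lemma loopW_dpath z s : hedge G z s -> s \in loopW ->
  exists2 b, b \in valS & dpath_via G W z b.
Proof.
move=> zs /loopW_cases /orP [sS|/andP [sW ws]]; last exact: reachesS_dpath zs sW ws.
by exists s => //; rewrite /dpath_via zs.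
Qed.

Lemma mem_pa_marg z (h : z \notin W) : (exists2 b, b \in valS & dpath_via G W z b) ->
  exist _ z h \in pa M S'.
Proof.
by move=> [_ /imsetP [v' v'S ->] zb]; rewrite inE; apply/existsP; exists v'; rewrite v'S.
Qed.

Lemma notin_marg z (h : z \notin W) : z \notin valS -> exist _ z h \notin S'.
Proof. by apply: contra => zS; apply/imsetP; exists (exist _ z h). Qed.

Local Notation edge_loopW := [rel x y | [&& x \in loopW, y \in loopW & hedge G x y]].

Lemma connect_loopW_chain a b u1 ur z : a \in valS -> b \in valS -> u1 \in W ->
  hedge G a u1 -> ur \in W -> hedge G ur b -> z \in W ->
  connect (edgeW G W) u1 z -> connect (edgeW G W) z ur ->
  connect edge_loopW a z /\ connect edge_loopW z b.
Proof.
move=> aS bS u1W au1 urW urb zW u1z zur.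
have inW y : y \in W -> connect (edgeW G W) u1 y -> connect (edgeW G W) y ur ->
    y \in loopW.
  move=> yW u1y yur; rewrite !inE yW /=; apply/orP; right; apply/andP; split.
    by apply/existsP; exists a; rewrite aS; apply/existsP; exists u1; rewrite u1W au1 u1y.
  by apply/existsP; exists b; rewrite bS; apply/existsP; exists ur; rewrite urW yur urb.
have W_path x y : connect (edgeW G W) u1 x -> connect (edgeW G W) y ur ->
    connect (edgeW G W) x y -> connect edge_loopW x y.
  move=> u1x yur /connect_between; apply: connect_sub.
  move=> x' y' /= /and5P [xx' x'y xy' y'y /edgeW_in [x'W y'W x'y']].
  apply: connect1; rewrite /= x'y' andbT.
  rewrite (inW x' x'W (connect_trans u1x xx') (connect_trans x'y yur)).
  by rewrite (inW y' y'W (connect_trans u1x xy') (connect_trans y'y yur)).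
split.
  apply: connect_trans (W_path _ _ (connect0 _ _) zur u1z).
  apply: connect1; rewrite /= (valS_loopW aS) au1 andbT.
  exact: inW u1W (connect0 _ _) (connect_trans u1z zur).
apply: connect_trans (W_path _ _ u1z (connect0 _ _) zur) _.
apply: connect1; rewrite /= (valS_loopW bS) urb !andbT.
exact: inW urW (connect_trans u1z zur) (connect0 _ _).
Qed.

Lemma loopW_loop : loop M S' -> loop G loopW.
Proof.
move=> /andP [ne /forallP lp]; have [v0 v0S] := set0Pn _ ne.
have S_connect a b : a \in valS -> b \in valS -> connect edge_loopW a b.
  move=> /imsetP [a' a'S ->] /imsetP [b' b'S ->].
  have := lp a'; rewrite a'S /= => /forallP /(_ b'); rewrite b'S /=.
  apply: homo_connect => x y /= /and3P [xS yS].
  have xSv : val x \in valS by apply/imsetP; exists x.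
  have ySv : val y \in valS by apply/imsetP; exists y.
  case/orP => [xy|/existsP [u1 /existsP [ur /and5P [u1W urW xu1 u1ur urb]]]].
    by apply: connect1; rewrite /= xy !valS_loopW.
  have [] := connect_loopW_chain xSv ySv u1W xu1 urW urb urW u1ur (connect0 _ _).
  exact: connect_trans.
have via_S z : z \in loopW -> (exists2 a, a \in valS & connect edge_loopW a z) /\
    (exists2 b, b \in valS & connect edge_loopW z b).
  rewrite inE => /orP [zS|]; first by split; exists z => //; exact: connect0.
  rewrite inE => /andP [zW /andP [/existsP [a /andP [aS /existsP [u1]]]]].
  move=> /and3P [u1W au1 u1z] /existsP [b /andP [bS /existsP [ur /and3P [urW zur urb]]]].
  have [az zb] := connect_loopW_chain aS bS u1W au1 urW urb zW u1z zur.
  by split; [exists a | exists b].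
apply/andP; split.
  by apply/set0Pn; exists (val v0); apply: valS_loopW; apply/imsetP; exists v0.
apply/forallP => x; apply/implyP => /via_S [_ [b bS xb]].
apply/forallP => y; apply/implyP => /via_S [[a aS ay] _].
exact: connect_trans xb (connect_trans (S_connect b a bS aS) ay).
Qed.

End LoopLift.

(** * Structural equations of the marginal HEDG *)

Lemma mem_pa1 (V : finType) (G : HEDG V) u v : (u \in pa G [set v]%SET) = hedge G u v.
Proof.
rewrite inE; apply/existsP/idP => [[v0 /andP [/set1P -> //]]|uv].
by exists v; rewrite inE eqxx.
Qed.

Lemma measurable_restr (V : finType) (W : {set V}) (dX : V -> measure_display)
    (X : forall v, measurableType (dX v)) : measurable_fun setT (restr W X).
Proof. by apply: measurable_piT_fun => u; exact: measurable_piT_eval. Qed.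

Section Marginal.
Context (R : realType) (V : finType) (G : HEDG V) (dX : V -> measure_display)
  (X : forall v, measurableType (dX v)) (W : {set V})
  (dO : measure_display) (Omega : measurableType dO) (P : probability Omega R)
  (dE : Fidx G -> measure_display) (E : forall F, measurableType (dE F))
  (Ev : forall F, Omega -> E F) (Xv : forall v, Omega -> X v)
  (sol : forall u, piT X * piT E -> X u) (asg : Fidx G -> Fidx (marg G W)).
Hypothesis sol_solves : forall u, u \in W -> solves W P Ev Xv u (sol u).
Hypothesis asg_sub : forall F, marg_face W F \subset val (asg F).

Local Notation M := (marg G W).
Local Notation X' := (fun u : subV W => X (val u)).
Local Notation Xv' := (fun u : subV W => Xv (val u)).

Local Notation marg_noise :=
  (fun j : Fidx M => (piT (fun k : fiber asg j => E (val k)) : measurableType _)).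

Definition unfiber (e' : piT marg_noise) : piT E :=
  fun F => e' (asg F) (exist _ F (eqxx (asg F))).

Lemma measurable_unfiber : measurable_fun setT unfiber.
Proof.
apply: measurable_piT_fun => F.
exact: measurableT_comp (@measurable_piT_eval _ _ _ (exist _ F (eqxx (asg F))))
  (@measurable_piT_eval _ _ marg_noise (asg F)).
Qed.

(* The coordinates in [W] are filled in with an arbitrary point: they are
   overwritten by the solutions [sol] in [lift] below. *)
Definition extend (x' : piT X') : piT X := fun u =>
  if pselect (u \in W) is right h then x' (exist _ u (introT negP h)) else point.

Lemma extend_notin x' u (h : u \notin W) : extend x' u = x' (exist _ u h).
Proof.
rewrite /extend; case: pselect => [uW|h']; first by case/negP: h.
by rewrite (bool_irrelevance (introT negP h') h).
Qed.

Lemma measurable_extend : measurable_fun setT extend.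
Proof.
apply: measurable_piT_fun => u; rewrite /extend.
case: pselect => [_|h]; first exact: measurable_cst.
exact: (@measurable_piT_eval _ _ X' (exist _ u (introT negP h))).
Qed.

Definition lift (z : piT X' * piT marg_noise) : piT X :=
  subst W sol (extend z.1, unfiber z.2).

Lemma measurable_lift : measurable_fun setT lift.
Proof.
apply: measurableT_comp (measurable_subst _) _ => [u /sol_solves [] //|].
apply: measurable_fun_pair; first exact: measurableT_comp measurable_extend measurable_fst.
exact: measurableT_comp measurable_unfiber measurable_snd.
Qed.

Lemma measurable_lift_unfiber : measurable_fun setT (fun z => (lift z, unfiber z.2)).
Proof.
apply: measurable_fun_pair; first exact: measurable_lift.
exact: measurableT_comp measurable_unfiber measurable_snd.
Qed.

Lemma lift_outcome_ae :
  {ae P, forall o, lift (outcome Xv' (fiber_vec Ev asg) o) = (outcome Xv Ev o).1}.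
Proof.
have sol_ae u : u \in W -> {ae P, forall o, Xv u o = sol u (outcome Xv Ev o)}.
  by move=> /sol_solves [].
apply: filterS (subst_outcome_ae sol_ae) => o <-.
apply: functional_extensionality_dep => u; rewrite /lift /subst.
case: ifPn => [uW|uW]; last by rewrite /= (extend_notin _ uW).
have [_ dep _] := sol_solves uW; apply: dep => // y.
by rewrite inE => /andP [yW _]; rewrite /= (extend_notin _ yW).
Qed.

Lemma depends_only_on_lift T (U0 : pred V) (Fs0 : pred (Fidx G))
    (g : piT X * piT E -> T) (U' : pred (subV W)) (Fs' : pred (Fidx M)) :
  depends_only_on U0 Fs0 g ->
  (forall u (h : u \notin W),
     U0 u \/ (exists2 a, (a \in W) && U0 a & u \in inputsW G W a) -> U' (exist _ u h)) ->
  (forall F, Fs0 F \/ (exists2 a, (a \in W) && U0 a & meets_ancestorsW W a F) ->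
     Fs' (asg F)) ->
  depends_only_on U' Fs' (fun z => g (lift z, unfiber z.2)).
Proof.
move=> dg sU sFs x x' e e' hx he /=.
apply: dg => [u U0u|F Fs0F]; last by rewrite /unfiber he //; apply: sFs; left.
rewrite /lift /subst /=; case: ifPn => uW; last first.
  by rewrite /= !(extend_notin _ uW); apply: (hx (exist _ u uW)); apply: sU; left.
have [_ dep _] := sol_solves uW; apply: dep => [y yu|F uF] /=.
  have yW : y \notin W by move: yu; rewrite inE => /andP [].
  rewrite /= !(extend_notin _ yW); apply: (hx (exist _ y yW)).
  by apply: sU; right; exists u; rewrite ?uW.
by rewrite /unfiber he //; apply: sFs; right; exists u; rewrite ?uW.
Qed.

Lemma mem_asg (u' : subV W) (F : Fidx G) :
  (val u' \in val F) || reached_from_via G W (val F) (val u') -> u' \in val (asg F).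
Proof. by move=> h; apply: (fintype.subsetP (asg_sub F)); rewrite inE. Qed.

Section StructuralEquations.
Context (f : forall v, piT X * piT E -> X v).

Definition marg_fun (v' : subV W) (z : piT X' * piT marg_noise) : X' v' :=
  f (val v') (lift z, unfiber z.2).

Lemma measurable_marg_fun (v' : subV W) : measurable_fun setT (f (val v')) ->
  measurable_fun setT (marg_fun v').
Proof. by move=> mf; exact: measurableT_comp mf measurable_lift_unfiber. Qed.

Lemma depends_only_on_marg_fun (v' : subV W) :
  depends_only_on (fun u => u \in pa G [set val v']%SET)
    (fun F : Fidx G => val v' \in val F) (f (val v')) ->
  depends_only_on (fun u' => u' \in pa M [set v']%SET)
    (fun j : Fidx M => v' \in val j) (marg_fun v').
Proof.
move=> df; apply: depends_only_on_lift df _ _ => [u h|F] /=.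
  case=> [uv|[a /andP [aW]]]; rewrite mem_pa1 /= /dpath_via; first by rewrite -mem_pa1 uv.
  rewrite mem_pa1 => av; rewrite inE => /andP [_ /existsP [b /andP [ba ub]]].
  move: ba; rewrite inE => /andP [bW ba].
  apply/orP; right; apply/existsP; exists b; apply/existsP; exists a.
  by rewrite bW aW ub ba av.
case=> [vF|[a /andP [aW]]]; first by apply: mem_asg; rewrite vF.
rewrite mem_pa1 => av /existsP [b /andP [ba bF]]; apply: mem_asg.
move: ba; rewrite inE => /andP [bW ba].
apply/orP; right; apply/existsP; exists b; rewrite bF; apply/existsP; exists a.
by rewrite bW aW ba av.
Qed.

Lemma marg_fun_ae (v' : subV W) :
  {ae P, forall o, Xv (val v') o = f (val v') (outcome Xv Ev o)} ->
  {ae P, forall o, Xv (val v') o = marg_fun v' (outcome Xv' (fiber_vec Ev asg) o)}.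
Proof.
by move=> fae; apply: filterS2 fae lift_outcome_ae => o -> lo; rewrite /marg_fun lo.
Qed.

End StructuralEquations.

Section MargLoop.
Variable S' : {set subV W}.
Local Notation St := (loopW G S').

Lemma asg_meets a (F : Fidx G) :
  a \in val F -> (a \in valS S') || ((a \in W) && reachesS G S' a) ->
  (val (asg F) :&: S' != finset.set0)%SET.
Proof.
move=> aF /orP [/imsetP [v' v'S av]|/andP [aW /existsP [b /andP [+ /existsP [ur]]]]].
  by apply/set0Pn; exists v'; rewrite inE v'S andbT; apply: mem_asg; rewrite -av aF.
move=> /imsetP [v' v'S bv] /and3P [urW aur urb]; subst b.
apply/set0Pn; exists v'; rewrite inE v'S andbT; apply: mem_asg.
apply/orP; right; apply/existsP; exists a; rewrite aF; apply/existsP; exists ur.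
by rewrite aW urW aur urb.
Qed.

Lemma pa_loopW_marg u (h : u \notin W) :
  u \in pa G St :\: St \/
  (exists2 a, (a \in W) && (a \in pa G St :\: St) & u \in inputsW G W a) ->
  exist _ u h \in pa M S' :\: S'.
Proof.
case=> [|[a /andP [aW]]]; rewrite finset.in_setD => /andP [uSt].
  rewrite inE => /existsP [s /andP [sSt us]]; rewrite finset.in_setD mem_pa_marg.
    by rewrite andbT notin_marg //; apply: contra uSt; exact: valS_loopW.
  exact: loopW_dpath us sSt.
move=> /(pa_loopW_reachesS aW) aS; rewrite inE => /andP [_ /existsP [b /andP [ba ub]]].
have bS := reachesS_ancestor ba aS.
have bW : b \in W by move: ba; rewrite inE => /andP [].
rewrite finset.in_setD mem_pa_marg ?andbT; last exact: reachesS_dpath ub bW bS.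
apply: notin_marg; apply: contra uSt => uS; rewrite inE; apply/orP; right.
rewrite inE aW aS andbT; apply/existsP; exists u; rewrite uS; apply/existsP; exists b.
by move: ba; rewrite inE bW ub => /andP [_ ->].
Qed.

Lemma meets_loopW_marg F :
  (val F :&: St != finset.set0)%SET \/
  (exists2 a, (a \in W) && (a \in pa G St :\: St) & meets_ancestorsW W a F) ->
  (val (asg F) :&: S' != finset.set0)%SET.
Proof.
case=> [/set0Pn [s]|[a /andP [aW]]].
  by rewrite finset.in_setI => /andP [sF /loopW_cases]; exact: asg_meets sF.
rewrite finset.in_setD => /andP [_ /(pa_loopW_reachesS aW) aS] /existsP [b /andP [ba bF]].
apply: (asg_meets bF); apply/orP; right.
by rewrite (reachesS_ancestor ba aS) andbT; move: ba; rewrite inE => /andP [].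
Qed.

End MargLoop.

Hypothesis hloop : loop_solvable P Xv Ev.

Lemma loop_solvable_marg : loop_solvable P Xv' (fiber_vec Ev asg).
Proof.
move=> S' lS v' v'S.
have vSt : val v' \in loopW G S' by apply: valS_loopW; apply/imsetP; exists v'.
have [g [mg [dg gae]]] := hloop (loopW_loop lS) vSt.
exists (fun z => g (lift z, unfiber z.2)); split; [|split].
- exact: measurableT_comp mg measurable_lift_unfiber.
- exact: depends_only_on_lift dg (@pa_loopW_marg S') (@meets_loopW_marg S').
- by apply: filterS2 gae lift_outcome_ae => o -> lo; rewrite lo.
Qed.

End Marginal.

Theorem mainTheorem12 (R : realType) (V : finType) (G : HEDG V)
  (dX : V -> measure_display) (X : forall v : V, measurableType (dX v))
  (PV : probability (piT X) R) :
  is_HEDG G ->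
  (forall v : V, standard_borel R (X v)) ->
  lsSEP G X PV ->
  forall W : {set V},
    lsSEP (marg G W) (fun u : subV W => X (val u)) (marginal W X PV).
Proof.
move=> _ _ [dO [Om [P [dE [E [Ev [f [Xv H]]]]]]]] W.
case: H => Esb [mEv [Eindep [mXv [hf [hse [hlaw hloop]]]]]].
have [sol sol_solves] := exists_solutions W hloop.
have [asg asg_sub] := exists_marg_maxface G W.
exists dO, Om, P, _, _, (fiber_vec Ev asg), (marg_fun sol f), (fun u' => Xv (val u')).
split; first by move=> j; apply: standard_borel_piT => k; exact: Esb.
split; first by move=> j; exact: measurable_fiber_vec.
split; first exact: mutually_independent_fibers.
split; first by move=> u'; exact: mXv.
split.
  move=> v'; have [mf df] := hf (val v').
  split; first exact (measurable_marg_fun sol_solves mf).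
  exact (depends_only_on_marg_fun sol_solves asg_sub df).
split; first by move=> v'; exact (marg_fun_ae asg sol_solves (hse (val v'))).
split; last exact (loop_solvable_marg sol_solves asg_sub hloop).
move=> B mB; rewrite /marginal -hlaw //.
by have := measurable_restr measurableT mB; rewrite setTI.
Qed.
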